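(* Let $n,k$ be integers with $3 \le k < n$, and consider the oriented $(n,k)$-star graph $\overrightarrow{S_{n,k}}$ with the clique-edge orientation described in the context. Let $v$ be a vertex and let $Q(v)$ be the oriented fundamental clique containing $v$. Let $n_E$ and $n_O$ denote the numbers of even-signed and odd-signed vertices in $Q(v)$. Then $n_E = n_O$ when $n-k$ is odd, and $|n_E - n_O| = 1$ when $n-k$ is even. Furthermore, $v$ has at least $\left\lfloor \frac{n-k}{2}\right\rfloor$ out-neighbours in $Q(v)$.
   Context: For integers $1 \le k < n$, the $(n,k)$-star graph $S_{n,k}$ has as vertices the $k$-permutations $u_1u_2\cdots u_k$ of $\{1,\dots,n\}$ (sequences of $k$ distinct elements). The clique neighbours of $u_1u_2\cdots u_k$ are the vertices $xu_2\cdots u_k$ with $x\in\{1,\dots,n\}\setminus\{u_1,\dots,u_k\}$; a vertex together with its clique neighbours forms a complete subgraph on $n-k+1$ vertices, called its fundamental clique (its edges are clique edges). (There are also star edges, joining $u_1\cdots u_k$ to the vertex obtained by swapping $u_1$ and $u_i$, $2\le i\le k$, but they play no role here.) The extended permutation label of a vertex $u = u_1\cdots u_k$ is the permutation $\sigma_u = u_1u_2\cdots u_k u_{k+1}\cdots u_n$ of $\{1,\dots,n\}$, where $u_{k+1}<u_{k+2}<\cdots<u_n$ is the increasing listing of $\{1,\dots,n\}\setminus\{u_1,\dots,u_k\}$. A vertex is even-signed (odd-signed) if $\sigma_u$ has an even (odd) number of inversions. Orientation of clique edges: for a clique edge $\{u,w\}$, if $\sigma_u$ and $\sigma_w$ have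 the same sign, the edge is directed from $u$ to $w$ iff $\sigma_u(1) > \sigma_w(1)$; if they have opposite signs, the edge is directed from $u$ to $w$ iff $\sigma_u(1) < \sigma_w(1)$. The oriented fundamental clique $Q(v)$ is the fundamental clique of $v$ with this orientation. *)

(* Vertices of S_{n,k} are sequences of k distinct elements of {1..n}. *)
From mathcomp Require Import all_boot.
Set Implicit Arguments. Unset Strict Implicit. Unset Printing Implicit Defensive.

Definition is_vertex (n k : nat) (u : seq nat) : bool :=
  [&& size u == k, uniq u & all (fun x => (1 <= x) && (x <= n)) u].

Definition ext_label (n : nat) (u : seq nat) : seq nat :=
  u ++ [seq x <- iota 1 n | x \notin u].

Definition inversions (s : seq nat) : nat :=
  \sum_(i < size s) \sum_(j < size s) ((i < j) && (nth 0 s j < nth 0 s i)).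

Definition even_signed (n : nat) (u : seq nat) : bool := ~~ odd (inversions (ext_label n u)).
Definition odd_signed (n : nat) (u : seq nat) : bool := odd (inversions (ext_label n u)).

Definition clique_nbrs (n : nat) (u : seq nat) : seq (seq nat) :=
  [seq x :: behead u | x <- iota 1 n & x \notin u].

Definition fund_clique (n : nat) (u : seq nat) : seq (seq nat) := u :: clique_nbrs n u.

(* orientation of the clique edge {u,w}: true iff directed from u to w *)
Definition clique_arc (n : nat) (u w : seq nat) : bool :=
  let su := head 0 (ext_label n u) in
  let sw := head 0 (ext_label n w) in
  if even_signed n u == even_signed n w then sw < su else su < sw.

From mathcomp Require Import all_boot zify.

(** Write v = u1 :: t and let s_0 < s_1 < ... < s_(n-k) be the symbols missing
    from t.  The vertices of Q(v) are the s_j :: t, with extended labels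
    s_j :: t ++ (the other s_i).  Compared with t ++ s_0 ... s_(n-k), moving s_j
    to the front creates j inversions with the sorted tail and, modulo 2, |t|
    inversions with t (it trades the pairs (a, s_j) with a > s_j in t for the
    pairs (s_j, a) with a < s_j).  So the sign of s_j :: t is c + j (mod 2) for a
    constant c: signs alternate along s_0 < ... < s_(n-k), which gives the two
    counts.  If v = s_p, a neighbour s_j :: t of the same sign (j = p mod 2) is an
    out-neighbour iff j < p, and one of the opposite sign iff j > p; hence v has
    floor(p/2) + ceil((n-k-p)/2) >= floor((n-k)/2) out-neighbours. *)

Lemma count_sum_nth (P : pred nat) s :
  count P s = \sum_(j < size s) P (nth 0 s j).
Proof.
elim: s => [|a s IHs]; first by rewrite big_ord0.
by rewrite big_ord_recl /= IHs.
Qed.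

Lemma count_nth_iota (P : pred nat) s :
  count P s = count (fun j => P (nth 0 s j)) (iota 0 (size s)).
Proof. by rewrite -[in LHS](mkseq_nth 0 s) count_map. Qed.

Lemma count_iota_odd b m N :
  count (fun j => b (+) odd j) (iota m N) = if b (+) odd m then uphalf N else half N.
Proof.
elim: N m => [|N IHN] m /=; first by case: ifP.
by rewrite IHN /=; case: b IHN; case: (odd m).
Qed.

Lemma count_iota_parity_balance b m :
  let e := count (fun j => ~~ b (+) odd j) (iota 0 m.+1) in
  let o := count (fun j => b (+) odd j) (iota 0 m.+1) in
  (odd m -> e = o) /\ (~~ odd m -> e = o.+1 \/ o = e.+1).
Proof.
rewrite /= !count_iota_odd /= !addbF uphalf_half.
by case: b; case: (odd m); split=> // _ /=; lia.
Qed.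

Lemma count_ltn_gtn x s : x \notin s ->
  count (fun y => y < x) s + count (fun y => x < y) s = size s.
Proof.
move=> x_s; rewrite -(count_predC (fun y => y < x)); congr (_ + _).
apply: eq_in_count => y y_s /=; rewrite -leqNgt [x <= y]leq_eqVlt.
by have /negbTE -> : x != y by apply: contraNneq x_s => ->.
Qed.

Lemma sorted_ltn_nth_mono s : sorted ltn s ->
  {in [pred i | i < size s] &, {mono nth 0 s : i j / i < j}}.
Proof.
by move=> s_sorted; apply/leqW_mono_in/leq_mono_in/(sorted_ltn_nth ltn_trans).
Qed.

Lemma count_ltn_nth_sorted s j : sorted ltn s -> j < size s ->
  count (fun y => y < nth 0 s j) s = j.
Proof.
move=> s_sorted j_lt; rewrite count_nth_iota -size_filter.
rewrite (@eq_in_filter _ _ (fun i => i < 0 + j)) ?filter_iota_ltn ?size_iota 1?ltnW //.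
by move=> i; rewrite mem_iota add0n => /andP[_ i_lt]; apply: sorted_ltn_nth_mono.
Qed.

Lemma inversions_cons a s :
  inversions (a :: s) = count (fun y => y < a) s + inversions s.
Proof.
rewrite /inversions /= big_ord_recl big_ord_recl /= add0n count_sum_nth.
congr (_ + _); apply: eq_bigr => i _; rewrite big_ord_recl /= add0n.
by apply: eq_bigr => j _; rewrite /bump !add1n ltnS.
Qed.

Definition cross_inversions (s1 s2 : seq nat) : nat :=
  \sum_(a <- s1) count (fun y => y < a) s2.

Lemma inversions_cat s1 s2 :
  inversions (s1 ++ s2) = inversions s1 + inversions s2 + cross_inversions s1 s2.
Proof.
rewrite /cross_inversions; elim: s1 => [|a s1 IHs1] /=.
  by rewrite /inversions big_ord0 big_nil addn0.
by rewrite !inversions_cons big_cons count_cat IHs1; lia.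
Qed.

Lemma inversions_sorted s : sorted ltn s -> inversions s = 0.
Proof.
elim: s => [|a s IHs] a_s; first by rewrite /inversions big_ord0.
rewrite inversions_cons IHs ?(path_sorted a_s) // addn0.
rewrite (@eq_in_count _ _ pred0) ?count_pred0 // => y.
by move=> /(allP (order_path_min ltn_trans a_s)) /ltnW /leq_gtF.
Qed.

Lemma odd_inversions_to_front x t S : sorted ltn S -> x \in S -> x \notin t ->
  odd (inversions (x :: t ++ filter (predC1 x) S)) =
  odd (size t + inversions t + cross_inversions t S) (+) odd (count (fun y => y < x) S).
Proof.
move=> S_sorted x_S x_t; set S' := filter (predC1 x) S.
have S_perm : perm_eq S (x :: S').
  by rewrite /S' -rem_filter ?perm_to_rem ?(sorted_uniq ltn_trans ltnn).
have count_S P : count P S = P x + count P S' by rewrite (permP S_perm).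
have cross_S : cross_inversions t S = cross_inversions t S' + count (fun y => x < y) t.
  rewrite /cross_inversions; elim: t {x_t} => [|a t IHt]; first by rewrite !big_nil.
  by rewrite !big_cons IHt count_S /=; lia.
rewrite inversions_cons count_cat inversions_cat (count_S (fun y => y < x)) ltnn.
rewrite cross_S [inversions S']inversions_sorted ?(sorted_filter ltn_trans) //.
rewrite -(count_ltn_gtn _ _ x_t) !oddD.
by rewrite /= addbF; do 5!case: (odd _).
Qed.

Lemma half_le_count_alternating_arcs p N : p < N ->
  half N.-1 <=
  count (fun j => (j != p) && (if odd p == odd j then j < p else p < j)) (iota 0 N).
Proof.
move=> p_lt; set arc := fun j => (j != p) && _; set r := N - p.+1.
have -> : N = p + (1 + r) by lia.
rewrite iotaD iotaD !count_cat /= add0n /arc ltnn eqxx andFb add0n addn1 -/arc.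
have before : count arc (iota 0 p) = count (fun j => ~~ odd p (+) odd j) (iota 0 p).
  apply: eq_in_count => j; rewrite mem_iota add0n => /andP[_ j_lt].
  rewrite /arc (ltn_eqF j_lt) j_lt (leq_gtF (ltnW j_lt)) /=.
  by case: (odd p); case: (odd j).
have after : count arc (iota p.+1 r) = count (fun j => odd p (+) odd j) (iota p.+1 r).
  apply: eq_in_count => j; rewrite mem_iota => /andP[p_lt_j _].
  rewrite /arc (gtn_eqF p_lt_j) p_lt_j (leq_gtF (ltnW p_lt_j)) /=.
  by case: (odd p); case: (odd j).
rewrite before after !count_iota_odd /= addbN addbb addnS /= halfD !uphalf_half.
by case: (odd p); case: (odd r) => /=; lia.
Qed.

(* [ext_label n u] is [u ++ missing n u] and [clique_nbrs n u] maps over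
   [missing n u], up to conversion: the [-/(missing _ _)] folds below rely on it. *)
Definition missing (n : nat) (u : seq nat) : seq nat :=
  [seq x <- iota 1 n | x \notin u].

Lemma missing_cons n x t : missing n (x :: t) = filter (predC1 x) (missing n t).
Proof.
by rewrite /missing -filter_predI; apply: eq_filter => y; rewrite /= in_cons negb_or.
Qed.

Lemma size_missing n t : uniq t -> all (fun x => 1 <= x <= n) t ->
  size (missing n t) = n - size t.
Proof.
move=> t_uniq t_range.
have count_in : count (mem t) (iota 1 n) = size t.
  rewrite -size_filter; apply/perm_size/uniq_perm => [||y].
  - by rewrite filter_uniq ?iota_uniq.
  - exact: t_uniq.
  - rewrite mem_filter mem_iota; apply/andP/idP => [[] //|y_t]; split=> //.
    by have /andP[y_ge1 y_le] := allP t_range y y_t; lia.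
have := count_predC (mem t) (iota 1 n).
by rewrite size_iota count_in => n_eq; rewrite -[in RHS]n_eq addKn -size_filter.
Qed.

Section FundamentalClique.

Variables (n u1 : nat) (t : seq nat).
Hypotheses (u1_range : 1 <= u1 <= n) (u1_t : u1 \notin t).

Local Notation S := (missing n t).
Local Notation N := (size S).
Local Notation s_ j := (nth 0 S j).
Local Notation p := (index u1 S).
Local Notation c := (odd (size t + inversions t + cross_inversions t S)).

Let S_sorted : sorted ltn S.
Proof. exact: (sorted_filter ltn_trans _ (iota_ltn_sorted 1 n)). Qed.

Let u1_S : u1 \in S.
Proof. by rewrite mem_filter u1_t mem_iota; lia. Qed.

Let s_p : s_ p = u1.
Proof. exact: nth_index. Qed.

Lemma odd_inversions_clique j : j < N ->
  odd (inversions (ext_label n (s_ j :: t))) = c (+) odd j.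
Proof.
move=> j_lt; have sj_S : s_ j \in S by apply: mem_nth.
have sj_t : s_ j \notin t by move: sj_S; rewrite mem_filter => /andP[].
rewrite /ext_label -/(missing _ _) missing_cons odd_inversions_to_front //.
by rewrite count_ltn_nth_sorted.
Qed.

Lemma count_fund_clique (P : pred (seq nat)) :
  count P (fund_clique n (u1 :: t)) = count (fun j => P (s_ j :: t)) (iota 0 N).
Proof.
rewrite -(count_nth_iota (fun x => P (x :: t))).
have S_perm : perm_eq S (u1 :: filter (predC1 u1) S).
  by rewrite -rem_filter ?perm_to_rem ?(sorted_uniq ltn_trans ltnn).
rewrite (permP S_perm) /fund_clique /clique_nbrs /= -/(missing _ _) missing_cons.
by rewrite count_map.
Qed.

Lemma count_clique_nbrs (P : pred (seq nat)) :
  count P (clique_nbrs n (u1 :: t)) =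
  count (fun j => (j != p) && P (s_ j :: t)) (iota 0 N).
Proof.
rewrite /clique_nbrs /= -/(missing _ _) missing_cons count_map count_filter.
rewrite count_nth_iota; apply: eq_in_count => j.
rewrite mem_iota add0n => /andP[_ j_lt].
by rewrite /= andbC -[X in _ != X]s_p nth_uniq ?index_mem ?(sorted_uniq ltn_trans ltnn).
Qed.

Lemma clique_arc_nth j : j < N ->
  clique_arc n (u1 :: t) (s_ j :: t) = if odd p == odd j then j < p else p < j.
Proof.
move=> j_lt; have p_lt : p < N by rewrite index_mem.
rewrite /clique_arc /even_signed /= -[in LHS]s_p !odd_inversions_clique //.
rewrite !sorted_ltn_nth_mono //.
by case: c; case: (odd p); case: (odd j).
Qed.

Lemma count_even_signed_clique :
  count (even_signed n) (fund_clique n (u1 :: t)) =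
  count (fun j => ~~ c (+) odd j) (iota 0 N).
Proof.
rewrite count_fund_clique; apply: eq_in_count => j; rewrite mem_iota => /andP[_ j_lt].
by rewrite /even_signed odd_inversions_clique // addNb.
Qed.

Lemma count_odd_signed_clique :
  count (odd_signed n) (fund_clique n (u1 :: t)) =
  count (fun j => c (+) odd j) (iota 0 N).
Proof.
rewrite count_fund_clique; apply: eq_in_count => j; rewrite mem_iota => /andP[_ j_lt].
by rewrite /odd_signed odd_inversions_clique.
Qed.

Lemma sign_balance_fund_clique :
  let nE := count (even_signed n) (fund_clique n (u1 :: t)) in
  let nO := count (odd_signed n) (fund_clique n (u1 :: t)) in
  (odd N.-1 -> nE = nO) /\ (~~ odd N.-1 -> nE = nO.+1 \/ nO = nE.+1).
Proof.
have N_gt0 : 0 < N by case: S u1_S.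
move=> nE nO; rewrite /nE /nO count_even_signed_clique count_odd_signed_clique.
by case: N N_gt0 => // m _; apply: count_iota_parity_balance.
Qed.

Lemma outdegree_clique_lb :
  half N.-1 <= count (clique_arc n (u1 :: t)) (clique_nbrs n (u1 :: t)).
Proof.
have p_lt : p < N by rewrite index_mem.
rewrite count_clique_nbrs (leq_trans (half_le_count_alternating_arcs _ _ p_lt)) //.
apply/eq_leq/eq_in_count => j; rewrite mem_iota => /andP[_ j_lt].
by rewrite /= clique_arc_nth.
Qed.

End FundamentalClique.

Theorem proposition1 (n k : nat) (v : seq nat) :
  3 <= k -> k < n -> is_vertex n k v ->
  let nE := count (even_signed n) (fund_clique n v) in
  let nO := count (odd_signed n) (fund_clique n v) in
  (odd (n - k) -> nE = nO) /\
  (~~ odd (n - k) -> nE = nO.+1 \/ nO = nE.+1) /\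
  half (n - k) <= count (clique_arc n v) (clique_nbrs n v).
Proof.
move=> k_ge3 k_lt_n; case: v => [|u1 t].
  by case/and3P => /eqP k0; rewrite -k0 in k_ge3.
case/and3P => /eqP size_v /andP[u1_t t_uniq] /andP[u1_range t_range].
have size_S : size (missing n t) = (n - k).+1.
  by rewrite size_missing //; move: size_v => /=; lia.
have := sign_balance_fund_clique _ _ _ u1_range u1_t.
have := outdegree_clique_lb _ _ _ u1_range u1_t.
by rewrite size_S /= => outdegree [balanced unbalanced].
Qed.
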